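(* Let $(X,d)$ be a compact metric space with $\dim X=0$. Then the identity map $\mathrm{id}_X$ is topologically stable.
   Context: $\mathcal{H}(X)$ is the set of homeomorphisms; $d_{C^0}(f,g)=\sup_x d(f(x),g(x))$; $D(f,g)=\max\{d_{C^0}(f,g),d_{C^0}(f^{-1},g^{-1})\}$. $f\in\mathcal{H}(X)$ is topologically stable if for every $\epsilon>0$ there is $\delta>0$ such that every $g\in\mathcal{H}(X)$ with $D(f,g)<\delta$ admits a continuous $h:X\to X$ with $d_{C^0}(h,\mathrm{id}_X)<\epsilon$ and $h\circ g=f\circ h$. *)

From Stdlib Require Import Reals List.
Open Scope R_scope.

Definition is_metric {X : Type} (d : X -> X -> R) : Prop :=
  (forall x y, 0 <= d x y) /\
  (forall x y, d x y = 0 <-> x = y) /\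
  (forall x y, d x y = d y x) /\
  (forall x y z, d x z <= d x y + d y z).

Definition ball {X : Type} (d : X -> X -> R) (x : X) (r : R) : X -> Prop :=
  fun y => d x y < r.

Definition is_open {X : Type} (d : X -> X -> R) (U : X -> Prop) : Prop :=
  forall x, U x -> exists r, 0 < r /\ forall y, ball d x r y -> U y.

Definition is_compact_metric {X : Type} (d : X -> X -> R) : Prop :=
  forall (I : Type) (U : I -> X -> Prop),
    (forall i, is_open d (U i)) ->
    (forall x, exists i, U i x) ->
    exists l : list I, forall x, exists i, In i l /\ U i x.

(** Lebesgue covering dimension 0: X is nonempty and every finite open cover
    has a finite open refinement which covers X and whose members are pairwise
    disjoint (order 0). *)
Definition covering_dim_zero {X : Type} (d : X -> X -> R) : Prop :=
  inhabited X /\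
  forall (U : list (X -> Prop)),
    (forall u, In u U -> is_open d u) ->
    (forall x, exists u, In u U /\ u x) ->
    exists V : list (X -> Prop),
      (forall v, In v V -> is_open d v) /\
      (forall x, exists v, In v V /\ v x) /\
      (forall v, In v V -> exists u, In u U /\ forall x, v x -> u x) /\
      (forall (i j : nat) (vi vj : X -> Prop),
          nth_error V i = Some vi -> nth_error V j = Some vj -> i <> j ->
          forall x, ~ (vi x /\ vj x)).

Definition is_continuous_map {X : Type} (d : X -> X -> R) (f : X -> X) : Prop :=
  forall x eps, 0 < eps -> exists delta, 0 < delta /\
    forall y, d x y < delta -> d (f x) (f y) < eps.

Definition is_homeo {X : Type} (d : X -> X -> R) (f finv : X -> X) : Prop :=
  is_continuous_map d f /\ is_continuous_map d finv /\
  (forall x, finv (f x) = x) /\ (forall x, f (finv x) = x).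

Definition is_dC0 {X : Type} (d : X -> X -> R) (f g : X -> X) (r : R) : Prop :=
  is_lub (fun y => exists x, y = d (f x) (g x)) r.

Definition dC0_lt {X : Type} (d : X -> X -> R) (f g : X -> X) (e : R) : Prop :=
  exists r, is_dC0 d f g r /\ r < e.

Definition D_lt {X : Type} (d : X -> X -> R) (f finv g ginv : X -> X) (e : R) : Prop :=
  exists r1 r2, is_dC0 d f g r1 /\ is_dC0 d finv ginv r2 /\ Rmax r1 r2 < e.

Definition topologically_stable {X : Type} (d : X -> X -> R) (f finv : X -> X) : Prop :=
  forall eps, 0 < eps -> exists delta, 0 < delta /\
    forall g ginv, is_homeo d g ginv -> D_lt d f finv g ginv delta ->
      exists h : X -> X, is_continuous_map d h /\ dC0_lt d h (fun x => x) eps /\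
        forall x, h (g x) = f (h x).

From Stdlib Require Import Reals List Lra ClassicalEpsilon.
Open Scope R_scope.

(* A zero-dimensional compact space has, for every [eps], a finite partition
   into open (hence clopen) pieces of diameter [< eps]; by compactness (a
   Lebesgue number [delta]) every point and its image under a homeomorphism
   [delta]-close to the identity lie in the same piece.  Sending each point to
   a fixed representative of its piece gives a continuous [h], [eps]-close to
   the identity, with [h o g = h]. *)

Definition pairwise_disjoint {X : Type} (V : list (X -> Prop)) : Prop :=
  forall (i j : nat) (vi vj : X -> Prop),
    nth_error V i = Some vi -> nth_error V j = Some vj -> i <> j ->
    forall x, ~ (vi x /\ vj x).

Lemma pairwise_disjoint_cons {X : Type} (w : X -> Prop) (V : list (X -> Prop)) :
  pairwise_disjoint (w :: V) ->
  pairwise_disjoint V /\ forall v x, In v V -> v x -> ~ w x.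
Proof.
  intros Hdisj. split.
  - intros i j vi vj Hi Hj Hij. apply (Hdisj (S i) (S j)); auto.
  - intros v x Hv Hvx Hwx. destruct (In_nth_error _ _ Hv) as [k Hk].
    apply (Hdisj 0%nat (S k) w v eq_refl Hk ltac:(discriminate) x). auto.
Qed.

Lemma list_posreal_lower_bound (l : list posreal) :
  exists delta, 0 < delta /\ forall r, In r l -> delta <= r.
Proof.
  induction l as [|r l [delta [Hdelta Hle]]].
  - exists 1. split; [lra | intros r []].
  - exists (Rmin r delta). split.
    + apply Rmin_glb_lt; [apply cond_pos | exact Hdelta].
    + intros s [<- | Hs]; [apply Rmin_l |].
      apply (Rle_trans _ delta); [apply Rmin_r | auto].
Qed.

Lemma piecewise_constant_selection {X : Type} (V : list (X -> Prop)) :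
  inhabited X -> pairwise_disjoint V ->
  exists h : X -> X,
    (forall v x y, In v V -> v x -> v y -> h x = h y) /\
    (forall v x, In v V -> v x -> v (h x)).
Proof.
  intros inh. induction V as [|w V IH]; intros Hdisj.
  - exists (fun x => x). split; intros v x; [intros y|]; intros [].
  - destruct (pairwise_disjoint_cons w V Hdisj) as [HdisjV Hsep].
    destruct (IH HdisjV) as [h [Hconst Hmem]].
    set (c := epsilon inh w).
    exists (fun x => if excluded_middle_informative (w x) then c else h x).
    split.
    + intros v x y [<- | Hv] Hx Hy.
      * do 2 (destruct excluded_middle_informative; try contradiction). reflexivity.
      * destruct excluded_middle_informative as [Hwx | _]; [destruct (Hsep v x Hv Hx Hwx) |].
        destruct excluded_middle_informative as [Hwy | _]; [destruct (Hsep v y Hv Hy Hwy) |].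
        eauto.
    + intros v x [<- | Hv] Hx; destruct excluded_middle_informative as [Hw | Hw].
      * apply epsilon_spec. eauto.
      * contradiction.
      * destruct (Hsep v x Hv Hx Hw).
      * exact (Hmem v x Hv Hx).
Qed.

Lemma dC0_lt_of_pointwise_le {X : Type} (d : X -> X -> R) (f g : X -> X) (b e : R) :
  inhabited X -> (forall x, d (f x) (g x) <= b) -> b < e -> dC0_lt d f g e.
Proof.
  intros [x0] Hb Hbe.
  destruct (completeness (fun y => exists x, y = d (f x) (g x))) as [m Hm].
  - exists b. intros y [x ->]. apply Hb.
  - exists (d (f x0) (g x0)). eauto.
  - exists m. split; [exact Hm |].
    assert (m <= b) by (apply (proj2 Hm); intros y [x ->]; apply Hb).
    lra.
Qed.

Lemma D_lt_pointwise {X : Type} (d : X -> X -> R) (f finv g ginv : X -> X) (e : R) :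
  D_lt d f finv g ginv e -> forall x, d (f x) (g x) < e.
Proof.
  intros [r1 [r2 [Hr1 [_ Hmax]]]] x.
  assert (d (f x) (g x) <= r1) by (apply (proj1 Hr1); exists x; reflexivity).
  pose proof (Rmax_l r1 r2). lra.
Qed.

Section CompactMetric.

Variable X : Type.
Variable d : X -> X -> R.
Hypothesis Hmetric : is_metric d.
Hypothesis Hcompact : is_compact_metric d.

Lemma dist_refl (x : X) : d x x = 0.
Proof. apply Hmetric. reflexivity. Qed.

Lemma dist_sym (x y : X) : d x y = d y x.
Proof. apply Hmetric. Qed.

Lemma dist_triangle (x y z : X) : d x z <= d x y + d y z.
Proof. apply Hmetric. Qed.

Lemma ball_open (c : X) (r : R) : is_open d (ball d c r).
Proof.
  intros y Hy. unfold ball in *. exists (r - d c y). split; [lra |].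
  intros z Hz. pose proof (dist_triangle c y z). lra.
Qed.

Lemma lebesgue_number (F : (X -> Prop) -> Prop) :
  (forall v, F v -> is_open d v) -> (forall x, exists v, F v /\ v x) ->
  exists delta, 0 < delta /\
    forall x, exists v, F v /\ forall y, d x y < delta -> v y.
Proof.
  intros Hopen Hcover.
  set (W := fun (p : X * posreal) (y : X) =>
    (exists v, F v /\ forall z, d (fst p) z < 2 * snd p -> v z) /\ d (fst p) y < snd p).
  destruct (Hcompact (X * posreal)%type W) as [l Hl].
  - intros [c r] y [Hv Hy]. simpl in *. exists (r - d c y). split; [lra |].
    intros z Hz. split; [exact Hv |]. unfold ball in Hz.
    simpl. pose proof (dist_triangle c y z). lra.
  - intro x. destruct (Hcover x) as [v [Hv Hx]].
    destruct (Hopen v Hv x Hx) as [r [Hr Hball]].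
    assert (Hr2 : 0 < r / 2) by lra.
    exists (x, mkposreal _ Hr2). split; simpl.
    + exists v. split; [exact Hv |]. intros z Hz. apply Hball. unfold ball. lra.
    + rewrite dist_refl. lra.
  - destruct (list_posreal_lower_bound (map snd l)) as [delta [Hdelta Hle]].
    exists delta. split; [exact Hdelta |]. intro x.
    destruct (Hl x) as [[c r] [Hin [[v [Hv Hball]] Hx]]]. simpl in *.
    pose proof (Hle r (in_map snd _ _ Hin)).
    exists v. split; [exact Hv |]. intros y Hy.
    apply Hball. pose proof (dist_triangle c x y). lra.
Qed.

Lemma small_open_partition (eps : R) :
  covering_dim_zero d -> 0 < eps ->
  exists V : list (X -> Prop),
    (forall v, In v V -> is_open d v) /\
    (forall x, exists v, In v V /\ v x) /\
    pairwise_disjoint V /\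
    (forall v x y, In v V -> v x -> v y -> d x y < eps).
Proof.
  intros [_ Hdim] Heps.
  destruct (Hcompact X (fun c => ball d c (eps / 2)) (fun c => ball_open c _))
    as [centers Hcenters].
  { intro x. exists x. unfold ball. rewrite dist_refl. lra. }
  destruct (Hdim (map (fun c => ball d c (eps / 2)) centers))
    as [V [Hopen [Hcover [Hrefine Hdisj]]]].
  - intros u Hu. apply in_map_iff in Hu. destruct Hu as [c [<- _]]. apply ball_open.
  - intro x. destruct (Hcenters x) as [c [Hc Hx]].
    exists (ball d c (eps / 2)). split; [apply in_map_iff; eauto | exact Hx].
  - exists V. repeat split; try assumption.
    intros v x y Hv Hx Hy. destruct (Hrefine v Hv) as [u [Hu Hvu]].
    apply in_map_iff in Hu. destruct Hu as [c [<- _]].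
    pose proof (Hvu x Hx) as Hcx. pose proof (Hvu y Hy) as Hcy. unfold ball in *.
    pose proof (dist_triangle x c y). rewrite (dist_sym x c) in *. lra.
Qed.

End CompactMetric.

Theorem corollary1p4 (X : Type) (d : X -> X -> R)
  (Hmetric : is_metric d) (Hcompact : is_compact_metric d) (Hdim : covering_dim_zero d) :
  topologically_stable d (fun x => x) (fun x => x).
Proof.
  intros eps Heps.
  assert (Heps2 : 0 < eps / 2) by lra.
  destruct (small_open_partition X d Hmetric Hcompact (eps / 2) Hdim Heps2)
    as [V [Hopen [Hcover [Hdisj Hsmall]]]].
  destruct (lebesgue_number X d Hmetric Hcompact (fun v => In v V) Hopen Hcover)
    as [delta [Hdelta Hleb]].
  destruct (piecewise_constant_selection V (proj1 Hdim) Hdisj) as [h [Hconst Hmem]].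
  exists delta. split; [exact Hdelta |].
  intros g ginv _ HD. exists h. split; [| split].
  - intros x e He. destruct (Hcover x) as [v [Hv Hx]].
    destruct (Hopen v Hv x Hx) as [r [Hr Hball]].
    exists r. split; [exact Hr |]. intros y Hy.
    rewrite (Hconst v x y Hv Hx (Hball y Hy)), (dist_refl X d Hmetric). exact He.
  - apply (dC0_lt_of_pointwise_le d h (fun x => x) (eps / 2)); [exact (proj1 Hdim) | | lra].
    intro x. destruct (Hcover x) as [v [Hv Hx]]. left.
    exact (Hsmall v (h x) x Hv (Hmem v x Hv Hx) Hx).
  - intro x. destruct (Hleb x) as [v [Hv Hnear]].
    apply (Hconst v); [exact Hv | apply Hnear | apply Hnear].
    + exact (D_lt_pointwise d _ _ g ginv delta HD x).
    + rewrite (dist_refl X d Hmetric). exact Hdelta.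
Qed.
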